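(* Let $\mathcal I$ be a canonical instance with groups $G_1,\dots,G_k$, group weights $w_1>\cdots>w_k$, sizes $n_1,\dots,n_k$, $W_q=n_qw_q$, $L_1=0$ and $L_r=\sum_{q<r}W_q/w_r$ for $r\ge2$. Fix $i\in[k]$ and define the proxy cost $v^\star_i$ on items by $v^\star_i(e_h)=w_i$ if $h\le L_i+n_i$; $v^\star_i(e_h)=w_s$ if $L_i+n_i+\cdots+n_{s-1}<h\le L_i+n_i+\cdots+n_s$ for $s=i+1,\dots,k$; and $v^\star_i(e_h)=0$ if $h>L_i+n_i+\cdots+n_k$; extend additively. Let $a$ be any agent of group $G_i$ with cost function $v$, and let $d$ be the largest index $h$ with $v(e_h)>w_i$ (with $d=0$ if there is none). Then for every integer $t$ with $d<t\le m$, $$\sum_{h=d+1}^{t}v(e_h)\le\sum_{h=d+1}^{t}v^\star_i(e_h).$$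
   Context: Chore-allocation instance: agents, a finite set $\mathcal M=\{e_1,\dots,e_m\}$ of indivisible items, positive weights, additive cost functions $v:2^{\mathcal M}\to\mathbb R_{\ge0}$. The weighted maximin share of agent $a$ with weight $w_a$ and cost $v_a$ is $\mathsf{WMMS}_a=w_a\min_{\text{allocations }(B_b)_b}\max_{b}\frac{v_a(B_b)}{w_b}$, allocations being ordered partitions of $\mathcal M$ into one (possibly empty) bundle per agent. An instance is canonical if: (i) $\max$ weight is $w_1$, weights sum to $1$, and every weight equals $w_1/2^p$ for some nonnegative integer $p$; (ii) every agent's total cost $v(\mathcal M)=1$, and every single-item cost is either $0$ or $w_1/2^p$ for some nonnegative integer $p$; (iii) every agent has $v(e_1)\ge\cdots\ge v(e_m)$; (iv) every agent's $\mathsf{WMMS}$ equals her weight. Agents are partitioned into groups $G_1,\dots,G_k$ by weight, all agents of $G_i$ having weight $w_i$, with $w_1>\cdots>w_k$, and $n_i=|G_i|$. *)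

From HB Require Import structures.
From mathcomp Require Import all_boot all_order all_algebra.
Set Implicit Arguments. Unset Strict Implicit. Unset Printing Implicit Defensive.
Import Order.TTheory GRing.Theory Num.Theory.
Local Open Scope ring_scope.

Section Defs.
Variable R : realFieldType.
Variables n m k : nat.
(* Agents are 'I_n, items e_1,...,e_m are 'I_m (item e_h is the ordinal h-1).
   Costs are additive: v a e is the cost of item e for agent a, and the
   cost of a bundle is the sum of its items' costs. *)

(* An allocation is a function item -> agent, i.e. an ordered partition of
   the items into one (possibly empty) bundle per agent. *)
Definition allocation := {ffun 'I_m -> 'I_n}.

Definition bundle_cost (va : 'I_m -> R) (A : allocation) (b : 'I_n) : R :=
  \sum_(e | A e == b) va e.

(* max_b v_a(B_b)/w_b  (costs and weights are nonnegative, so 0 is a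
   harmless identity element of max) *)
Definition alloc_value (w : 'I_n -> R) (va : 'I_m -> R) (A : allocation) : R :=
  \big[Num.max/0]_(b : 'I_n) (bundle_cost va A b / w b).

(* min over all allocations (the set of allocations is finite; it is
   nonempty as soon as there is an agent). *)
Definition mms_value (w : 'I_n -> R) (va : 'I_m -> R) : R :=
  match enum {: allocation} with
  | [::] => 0
  | A0 :: _ => \big[Num.min/alloc_value w va A0]_(A : allocation) alloc_value w va A
  end.

Definition WMMS (w : 'I_n -> R) (va : 'I_m -> R) (a : 'I_n) : R :=
  w a * mms_value w va.

Definition wmax (w : 'I_n -> R) : R := \big[Num.max/0]_(a : 'I_n) w a.

(* Instance data: group weights gw : 'I_k -> R (group G_{s+1} is indexed by
   the ordinal s), group assignment g, item costs v.  The weight of agent a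
   is gw (g a). *)
Record canonical_instance (gw : 'I_k -> R) (g : 'I_n -> 'I_k)
    (v : 'I_n -> 'I_m -> R) : Prop := {
  ci_gw_decr : forall s t : 'I_k, (s < t)%N -> gw t < gw s;
  ci_groups_nonempty : forall s : 'I_k, exists a, g a = s;
  ci_w_pos : forall a, 0 < gw (g a);
  ci_v_nonneg : forall a e, 0 <= v a e;
  ci_w_sum : \sum_(a : 'I_n) gw (g a) = 1;
  ci_w_pow2 : forall a, exists p : nat,
      gw (g a) = wmax (fun b => gw (g b)) / 2 ^+ p;
  ci_v_total : forall a, \sum_(e : 'I_m) v a e = 1;
  ci_v_pow2 : forall a e, v a e = 0 \/
      exists p : nat, v a e = wmax (fun b => gw (g b)) / 2 ^+ p;
  ci_v_sorted : forall a (e f : 'I_m), (e <= f)%N -> v a f <= v a e;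
  ci_wmms : forall a, WMMS (fun b => gw (g b)) (v a) a = gw (g a)
}.

Definition group_size (g : 'I_n -> 'I_k) (q : 'I_k) : nat := #|[set b | g b == q]|.

Definition Wgrp (gw : 'I_k -> R) (g : 'I_n -> 'I_k) (q : 'I_k) : R :=
  (group_size g q)%:R * gw q.

Definition Lgrp (gw : 'I_k -> R) (g : 'I_n -> 'I_k) (r : 'I_k) : R :=
  (\sum_(q : 'I_k | (q < r)%N) Wgrp gw g q) / gw r.

Definition cumul_le gw g (i s : 'I_k) : R :=
  Lgrp gw g i + (\sum_(q : 'I_k | (i <= q <= s)%N) group_size g q)%:R.
Definition cumul_lt gw g (i s : 'I_k) : R :=
  Lgrp gw g i + (\sum_(q : 'I_k | (i <= q < s)%N) group_size g q)%:R.

(* proxy cost v*_i(e_h), h 1-based *)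
Definition vstar gw g (i : 'I_k) (h : nat) : R :=
  if h%:R <= cumul_le gw g i i then gw i
  else match [pick s : 'I_k | (i < s)%N && (cumul_lt gw g i s < h%:R)
                               && (h%:R <= cumul_le gw g i s)] with
       | Some s => gw s
       | None => 0
       end.

Definition dindex (va : 'I_m -> R) (wi : R) : nat :=
  \max_(j : 'I_m | wi < va j) j.+1.

End Defs.

From HB Require Import structures.
From mathcomp Require Import all_boot all_order all_algebra.
From mathcomp Require Import zify ring lra.
Import Order.TTheory GRing.Theory Num.Theory.
Set Implicit Arguments. Unset Strict Implicit. Unset Printing Implicit Defensive.
Local Open Scope ring_scope.

(* Since WMMS_a = w_a, some allocation gives every agent b a bundle of v-cost at most
   w_b.  Items costing more than w_s can only go to agents of the groups before s, so
   a prefix of such items costs at most W_1 + ... + W_(s-1).  The proxy v*_i is built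
   so that its prefix of length L_i + n_i + ... + n_(s-1) (an integer, since all
   weights are w_1/2^p) costs at least that much, and the s-th block of v*_i consists
   of items worth at least w_s.  Strong induction on t then compares prefix sums: if
   t lies in block s, either some item before t costs at most w_s, and the sum splits
   at the first such item, or the whole prefix is heavy and the capacity bound
   applies.  Items before d cost more than w_i >= v*_i, so dropping them keeps the
   inequality. *)

Lemma sum_ord_nat_range (V : nmodType) (m d t : nat) (G : nat -> V) :
  (t <= m)%N -> \sum_(j : 'I_m | (d <= j < t)%N) G j = \sum_(d <= j < t) G j.
Proof.
move=> le_tm; rewrite -(big_mkord (fun j => (d <= j < t)%N) G).
by rewrite [RHS](big_nat_widenl _ 0) // [RHS](big_nat_widen _ _ m).
Qed.

Lemma ler_sum_subpred (R : numDomainType) (I : finType) (P Q : pred I) (F : I -> R) :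
  (forall i, 0 <= F i) -> (forall i, P i -> Q i) ->
  \sum_(i | P i) F i <= \sum_(i | Q i) F i.
Proof.
move=> F_ge0 PQ; rewrite [X in _ <= X](bigID P) /=.
rewrite (eq_bigl P) ?lerDl ?sumr_ge0 // => i.
by case: (boolP (P i)) => [/PQ ->|]; rewrite ?andbF.
Qed.

Lemma mms_value_attained (R : realFieldType) (n m : nat) (w : 'I_n -> R)
    (va : 'I_m -> R) (a : 'I_n) :
  exists A, mms_value w va = alloc_value w va A.
Proof.
rewrite /mms_value; case E: (enum _) => [|A0 s].
  by have := mem_enum {: allocation n m} [ffun=> a]; rewrite E.
apply: (big_ind (fun x => exists A, x = alloc_value w va A)); first by exists A0.
  by move=> x y [A ->] [B ->]; rewrite /Num.min; case: ifP; [exists A | exists B].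
by move=> A _; exists A.
Qed.

Lemma bundle_cost_le_weight (R : realFieldType) (n m : nat) (w : 'I_n -> R)
    (va : 'I_m -> R) (A : allocation n m) (b : 'I_n) :
  0 < w b -> bundle_cost va A b <= alloc_value w va A * w b.
Proof.
by move=> w_gt0; rewrite -ler_pdivrMr // (le_bigmax _ (fun b => _ / w b)).
Qed.

Lemma item_cost_le_bundle_cost (R : realFieldType) (n m : nat) (va : 'I_m -> R)
    (A : allocation n m) (j : 'I_m) :
  (forall e, 0 <= va e) -> va j <= bundle_cost va A (A j).
Proof. by move=> va_ge0; rewrite /bundle_cost (bigD1 j) //= lerDl sumr_ge0. Qed.

Section CanonicalInstance.
Variables (R : realFieldType) (n m k : nat).
Variables (gw : 'I_k -> R) (g : 'I_n -> 'I_k) (v : 'I_n -> 'I_m -> R).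
Hypothesis ci : canonical_instance gw g v.

Lemma gw_gt0 s : 0 < gw s.
Proof. by have [b <-] := ci_groups_nonempty ci s; apply: ci_w_pos ci b. Qed.

Lemma gw_nonincr (s t : 'I_k) : (s <= t)%N -> gw t <= gw s.
Proof.
rewrite leq_eqVlt => /orP[/eqP/val_inj -> // | /(ci_gw_decr ci)/ltW //].
Qed.

Lemma weight_ratio_pow2 (q s : 'I_k) :
  (q < s)%N -> exists e : nat, gw q / gw s = (2 ^ e)%:R.
Proof.
move=> /(ci_gw_decr ci) lt_gw.
have [bq hbq] := ci_groups_nonempty ci q; have [bs hbs] := ci_groups_nonempty ci s.
have gq_gt0 := ci_w_pos ci bq.
have [pq hpq] := ci_w_pow2 ci bq; have [ps hps] := ci_w_pow2 ci bs.
rewrite -hbq -hbs hpq hps in lt_gw gq_gt0 *; set W := wmax _ in lt_gw gq_gt0 *.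
have pow2_gt0 p : (0 : R) < 2 ^+ p by rewrite exprn_gt0.
have W_gt0 : 0 < W by rewrite pmulr_lgt0 // in gq_gt0; rewrite invr_gt0.
have lt_p : (pq < ps)%N.
  by rewrite ltr_pM2l // ltf_pV2 ?posrE // ltr_eXn2l // ltr1n in lt_gw.
exists (ps - pq)%N; rewrite natrX expfB //.
by field; rewrite !gt_eqF.
Qed.

Lemma Lgrp_nat (i : 'I_k) : exists N : nat, Lgrp gw g i = N%:R.
Proof.
rewrite /Lgrp mulr_suml.
apply: (big_ind (fun x => exists N : nat, x = N%:R)); first by exists 0%N.
  by move=> x y [N1 ->] [N2 ->]; exists (N1 + N2)%N; rewrite natrD.
move=> q lt_qi; have [e ratio_e] := weight_ratio_pow2 lt_qi.
by exists (group_size g q * 2 ^ e)%N; rewrite /Wgrp -mulrA ratio_e natrM.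
Qed.

Definition Wlt (s : nat) : R := \sum_(q : 'I_k | (q < s)%N) Wgrp gw g q.

Lemma sum_weights_groups_lt (s : nat) : \sum_(b | (g b < s)%N) gw (g b) = Wlt s.
Proof.
rewrite (partition_big g (fun q : 'I_k => (q < s)%N)) //=.
apply: eq_bigr => q lt_qs.
rewrite (eq_big (fun b => b \in [set b | g b == q]) (fun _ => gw q)).
- by rewrite sumr_const /Wgrp /group_size mulr_natl.
- by move=> b; rewrite inE; case: eqP => [->|]; rewrite ?lt_qs ?andbF.
- by move=> b /andP[_ /eqP ->].
Qed.

Lemma WltS (s : nat) (lt_sk : (s < k)%N) : Wlt s.+1 = Wlt s + Wgrp gw g (Ordinal lt_sk).
Proof.
rewrite /Wlt (bigD1 (Ordinal lt_sk)) //= addrC; congr (_ + _).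
by apply: eq_bigl => q; rewrite -val_eqE /=; lia.
Qed.

Section Agent.
Variable a : 'I_n.

(* Costs indexed by 0-based naturals, padded by 0 beyond the last item. *)
Definition cost (j : nat) : R := oapp (v a) 0 (insub j : option 'I_m).

Lemma cost_ord (j : 'I_m) : cost j = v a j.
Proof. by rewrite /cost valK. Qed.

Lemma cost_out (j : nat) : (m <= j)%N -> cost j = 0.
Proof. by move=> le_mj; rewrite /cost insubF //= ltnNge le_mj. Qed.

Lemma cost_ge0 (j : nat) : 0 <= cost j.
Proof. by rewrite /cost; case: insub => //= e; apply: (ci_v_nonneg ci). Qed.

Lemma cost_nonincr (j j' : nat) : (j <= j')%N -> cost j' <= cost j.
Proof.
move=> le_jj'; have [lt_j'm | le_mj'] := ltnP j' m; last by rewrite cost_out ?cost_ge0.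
have lt_jm : (j < m)%N by lia.
by rewrite -[j']/(val (Ordinal lt_j'm)) -[j]/(val (Ordinal lt_jm)) !cost_ord (ci_v_sorted ci).
Qed.

Lemma allocation_within_weights :
  exists A : allocation n m, forall b, bundle_cost (v a) A b <= gw (g b).
Proof.
have [A mmsE] := mms_value_attained (fun b => gw (g b)) (v a) a.
have mms1 : mms_value (fun b => gw (g b)) (v a) = 1.
  apply: (mulfI (x := gw (g a))); first by rewrite gt_eqF // (ci_w_pos ci).
  by rewrite mulr1; apply: (ci_wmms ci a).
exists A => b; rewrite -[gw (g b)]mul1r -mms1 mmsE.
exact/bundle_cost_le_weight/(ci_w_pos ci).
Qed.

Lemma heavy_prefix_cost_le_Wlt (s t : nat) : (t <= m)%N ->
  (forall j, (j < t)%N -> forall b, (s <= g b)%N -> gw (g b) < cost j) ->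
  \sum_(0 <= j < t) cost j <= Wlt s.
Proof.
move=> le_tm heavy; have [A within] := allocation_within_weights.
have v_ge0 := ci_v_nonneg ci a.
rewrite -(sum_ord_nat_range _ _ le_tm) (eq_bigr (v a)) => [|j _]; last by rewrite cost_ord.
rewrite (partition_big A predT) //= -sum_weights_groups_lt [X in _ <= X]big_mkcond /=.
apply: ler_sum => b _; case: ltnP => [_ | le_sgb].
  by apply: le_trans (within b); apply: ler_sum_subpred => [//|j /andP[_ ->]].
rewrite big1 // => j /andP[lt_jt /eqP Aj_b]; exfalso.
have := le_trans (item_cost_le_bundle_cost A j v_ge0) (within (A j)).
by rewrite Aj_b leNgt -cost_ord heavy.
Qed.

Section Group.
Variable i : 'I_k.
Variable N : nat.
Hypothesis Lgrp_iE : Lgrp gw g i = N%:R.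

Definition cumul (q : nat) : nat :=
  (N + \sum_(q' : 'I_k | (i <= q' <= q)%N) group_size g q')%N.

Lemma cumul_leE (s : 'I_k) : cumul_le gw g i s = (cumul s)%:R.
Proof. by rewrite /cumul_le Lgrp_iE natrD. Qed.

Lemma cumul_ltE (s : 'I_k) : (i < s)%N -> cumul_lt gw g i s = (cumul s.-1)%:R.
Proof.
move=> lt_is; rewrite /cumul_lt Lgrp_iE natrD; congr (_ + (_)%:R).
by apply: eq_bigl => q /=; lia.
Qed.

Lemma leq_cumul (q1 q2 : nat) : (q1 <= q2)%N -> (cumul q1 <= cumul q2)%N.
Proof.
move=> le_q; rewrite leq_add2l [X in (X <= _)%N]big_mkcond [X in (_ <= X)%N]big_mkcond.
by apply: leq_sum => q _ /=; do 2 case: ifP => //; lia.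
Qed.

Lemma cumul_i : cumul i = (N + group_size g i)%N.
Proof.
rewrite /cumul (eq_bigl (pred1 i)) ?big_pred1_eq // => q /=.
by rewrite -val_eqE /=; lia.
Qed.

Lemma cumulS (s : nat) (lt_s1k : (s.+1 < k)%N) : (i <= s)%N ->
  cumul s.+1 = (cumul s + group_size g (Ordinal lt_s1k))%N.
Proof.
move=> le_is; rewrite /cumul (bigD1 (Ordinal lt_s1k)) /=; last by lia.
rewrite -addnA; congr (_ + _)%N; rewrite addnC; congr (_ + _)%N.
by apply: eq_bigl => q /=; rewrite -val_eqE /=; lia.
Qed.

Lemma exists_block (h s : nat) : (s < k)%N -> (i <= s)%N ->
  (cumul i < h <= cumul s)%N ->
  exists s0 : 'I_k, [/\ (i < s0)%N, (cumul s0.-1 < h)%N & (h <= cumul s0)%N].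
Proof.
elim: s => [|s IHs] lt_sk le_is /andP[lt_ih le_hs].
  by have := @leq_cumul 0 i; lia.
have [le_hs' | lt_sh] := leqP h (cumul s).
  by apply: IHs; have := @leq_cumul s i; rewrite ?lt_ih ?le_hs'; lia.
by exists (Ordinal lt_sk); split => //=; have := @leq_cumul s.+1 i; lia.
Qed.

Lemma vstar_le_gw (h : nat) : vstar gw g i h <= gw i.
Proof.
rewrite /vstar; case: ifP => // _; case: pickP => [s /andP[/andP[lt_is _] _]|_].
  exact/ltW/(ci_gw_decr ci).
exact/ltW/gw_gt0.
Qed.

Lemma vstar_ge0 (h : nat) : 0 <= vstar gw g i h.
Proof.
by rewrite /vstar; case: ifP => _; [|case: pickP => [s _|_]]; rewrite ?lexx ?ltW ?gw_gt0.
Qed.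

Lemma gw_le_vstar (s : 'I_k) (h : nat) :
  (i <= s)%N -> (h <= cumul s)%N -> gw s <= vstar gw g i h.
Proof.
move=> le_is le_hs; rewrite /vstar cumul_leE ler_nat; case: ifP => [_|le_ih].
  exact: gw_nonincr.
case: pickP => [s' /andP[/andP[lt_is' lt_s'h] le_hs'] | no_block].
  rewrite cumul_ltE // ltr_nat in lt_s'h; apply: gw_nonincr; rewrite leqNgt.
  by apply/negP => lt_ss'; have := @leq_cumul s s'.-1; lia.
have lt_ih : (cumul i < h)%N by rewrite ltnNge le_ih.
have [|s0 [lt_is0 lt_s0h le_hs0]] := @exists_block h s (ltn_ord s) le_is.
  by rewrite lt_ih le_hs.
by have := no_block s0; rewrite lt_is0 cumul_ltE // cumul_leE ltr_nat ler_nat lt_s0h le_hs0.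
Qed.

Definition proxy (h : nat) : R := vstar gw g i h.+1.

Lemma sum_proxy_block (s : 'I_k) (lo hi : nat) : (i <= s)%N -> (hi <= cumul s)%N ->
  (hi - lo)%:R * gw s <= \sum_(lo <= h < hi) proxy h.
Proof.
move=> le_is le_hs; rewrite mulr_natl -sumr_const_nat.
by apply: ler_sum_nat => h /andP[_ lt_hhi]; apply: gw_le_vstar => //; lia.
Qed.

Lemma Wlt_i : Wlt i = N%:R * gw i.
Proof. by rewrite -Lgrp_iE /Lgrp divfK ?gt_eqF ?gw_gt0. Qed.

Lemma Wlt_le_sum_proxy_cumul (d : nat) (lt_idk : (i + d < k)%N) :
  Wlt (i + d).+1 <= \sum_(0 <= h < cumul (i + d)) proxy h.
Proof.
elim: d lt_idk => [|d IHd] lt_idk.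
  have iE : Ordinal lt_idk = i by apply: val_inj; rewrite /= addn0.
  rewrite (WltS lt_idk) iE !addn0 Wlt_i /Wgrp -mulrDl -natrD -cumul_i.
  by have := @sum_proxy_block i 0 (cumul i) (leqnn _) (leqnn _); rewrite subn0.
move: lt_idk; rewrite addnS => lt_idk.
rewrite (WltS lt_idk) (cumulS lt_idk) ?leq_addr //.
rewrite (@big_cat_nat _ _ _ (cumul (i + d))) ?leq_addr //=.
apply: lerD; first by apply: IHd; lia.
have := @sum_proxy_block (Ordinal lt_idk) (cumul (i + d))
  (cumul (i + d) + group_size g (Ordinal lt_idk)) (leqW (leq_addr _ _)).
by rewrite addKn /Wgrp; apply; rewrite (cumulS lt_idk) ?leq_addr.
Qed.

Lemma Wlt_le_sum_proxy (s t : nat) : (i <= s < k)%N -> (cumul s <= t)%N ->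
  Wlt s.+1 <= \sum_(0 <= h < t) proxy h.
Proof.
move=> /andP[le_is lt_sk] le_st.
have lt_ik : (i + (s - i) < k)%N by rewrite subnKC.
have := Wlt_le_sum_proxy_cumul lt_ik; rewrite subnKC // => /le_trans; apply.
rewrite [X in _ <= X](@big_cat_nat _ _ _ (cumul s)) //= lerDl.
by apply: sumr_ge0 => h _; apply: vstar_ge0.
Qed.

Local Notation d := (dindex (v a) (gw i)).

Lemma dindex_le : (d <= m)%N.
Proof. by apply/bigmax_leqP => j _; apply: ltn_ord. Qed.

Lemma gw_lt_cost (j : nat) : (j < d)%N -> gw i < cost j.
Proof.
move=> lt_jd; have lt_jm : (j < m)%N by have := dindex_le; lia.
rewrite -[j]/(val (Ordinal lt_jm)) cost_ord ltNge; apply/negP => le_vw.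
suff : (d <= j)%N by lia.
apply/bigmax_leqP => j' lt_wv; rewrite ltnNge; apply/negP => le_jj'.
have le_vjv := ci_v_sorted ci a (e := Ordinal lt_jm) le_jj'.
by have := lt_le_trans lt_wv (le_trans le_vjv le_vw); rewrite ltxx.
Qed.

Lemma cost_le_gw (j : nat) : (d <= j)%N -> cost j <= gw i.
Proof.
move=> le_dj; have [lt_jm | le_mj] := ltnP j m; last by rewrite cost_out ?ltW ?gw_gt0.
rewrite -[j]/(val (Ordinal lt_jm)) cost_ord leNgt; apply/negP => lt_wv.
have := @leq_bigmax_cond _ (fun j => gw i < v a j) (fun j : 'I_m => j.+1) _ lt_wv.
by rewrite /= -/(dindex (v a) (gw i)); lia.
Qed.

Lemma sum_cost_le_proxy_of_prefix (t : nat) : (d <= t)%N ->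
  \sum_(0 <= j < t) cost j <= \sum_(0 <= j < t) proxy j ->
  \sum_(d <= j < t) cost j <= \sum_(d <= j < t) proxy j.
Proof.
move=> le_dt; rewrite !(@big_cat_nat _ _ _ d 0 t) //=.
suff : \sum_(0 <= j < d) proxy j <= \sum_(0 <= j < d) cost j by lra.
apply: ler_sum_nat => j /andP[_ lt_jd].
exact/ltW/(le_lt_trans (vstar_le_gw _) (gw_lt_cost lt_jd)).
Qed.

Lemma sum_cost_le_proxy_of_heavy_prefix (s t : nat) :
  (i < s <= k)%N -> (cumul s.-1 <= t)%N -> (d <= t <= m)%N ->
  (forall j, (j < t)%N -> forall b, (s <= g b)%N -> gw (g b) < cost j) ->
  \sum_(d <= j < t) cost j <= \sum_(d <= j < t) proxy j.
Proof.
move=> /andP[lt_is le_sk] le_st /andP[le_dt le_tm] heavy.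
apply: sum_cost_le_proxy_of_prefix => //.
apply: le_trans (heavy_prefix_cost_le_Wlt le_tm heavy) _.
by rewrite -(ltn_predK lt_is); apply: Wlt_le_sum_proxy => //; lia.
Qed.

Lemma sum_cost_le_proxy_in_block (s : 'I_k) (t : nat) :
  (i < s)%N -> (cumul s.-1 < t <= cumul s)%N -> (d <= t <= m)%N ->
  (forall t', (t' < t)%N -> (d <= t' <= m)%N ->
     \sum_(d <= j < t') cost j <= \sum_(d <= j < t') proxy j) ->
  \sum_(d <= j < t) cost j <= \sum_(d <= j < t) proxy j.
Proof.
move=> lt_is /andP[lt_st le_ts] /andP[le_dt le_tm] IHt.
(* [p] is the first item of cost at most [w_s], or [t] if there is none before [t]. *)
have light_exists : exists j, (t <= j)%N || (cost j <= gw s) by exists t; rewrite leqnn.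
have [p p_light p_min] := ex_minnP light_exists.
have heavy_before_p j : (j < p)%N -> gw s < cost j.
  move=> lt_jp; rewrite ltNge; apply/negP => light.
  by have := p_min j; rewrite light orbT leqNgt lt_jp => /(_ isT).
have [lt_pt | le_tp] := ltnP p t; last first.
  apply: (@sum_cost_le_proxy_of_heavy_prefix s).
  - by rewrite lt_is ltnW.
  - exact: ltnW.
  - by rewrite le_dt.
  by move=> j lt_jt b le_sgb; apply: le_lt_trans (gw_nonincr le_sgb) (heavy_before_p j _); lia.
have light : cost p <= gw s by move: p_light; rewrite leqNgt lt_pt.
have le_dp : (d <= p)%N.
  rewrite leqNgt; apply/negP => /gw_lt_cost/lt_le_trans/(_ light).
  by rewrite ltNge ltW // (ci_gw_decr ci lt_is).
have le_pt := ltnW lt_pt.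
rewrite !(@big_cat_nat _ _ _ p d t) //=.
apply: lerD; first by apply: IHt => //; lia.
apply: ler_sum_nat => j /andP[le_pj lt_jt].
apply: le_trans (cost_nonincr le_pj) _; apply: le_trans light _.
by apply: gw_le_vstar; lia.
Qed.

Lemma sum_cost_le_proxy (t : nat) : (d <= t <= m)%N ->
  \sum_(d <= j < t) cost j <= \sum_(d <= j < t) proxy j.
Proof.
have lt_ik := ltn_ord i.
elim/ltn_ind: t => t IHt /andP[le_dt le_tm].
have [le_ti | lt_it] := leqP t (cumul i).
  apply: ler_sum_nat => j /andP[le_dj lt_jt].
  by apply: le_trans (cost_le_gw le_dj) _; apply: gw_le_vstar => //; lia.
have [lt_kt | le_tk] := ltnP (cumul k.-1) t.
  apply: (@sum_cost_le_proxy_of_heavy_prefix k); rewrite ?lt_ik ?le_dt ?leqnn //.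
    exact: ltnW.
  by move=> j _ b; rewrite leqNgt ltn_ord.
have [s [lt_is lt_st le_ts]] : exists s : 'I_k,
    [/\ (i < s)%N, (cumul s.-1 < t)%N & (t <= cumul s)%N].
  by apply: (@exists_block t k.-1); rewrite ?lt_it ?le_tk //; lia.
by apply: (sum_cost_le_proxy_in_block lt_is); rewrite ?lt_st ?le_ts ?le_dt.
Qed.

End Group.
End Agent.
End CanonicalInstance.

Theorem mainTheorem9 (R : realFieldType) (n m k : nat)
    (gw : 'I_k -> R) (g : 'I_n -> 'I_k) (v : 'I_n -> 'I_m -> R) :
  canonical_instance gw g v ->
  forall (i : 'I_k) (a : 'I_n), g a = i ->
  forall t : nat, (dindex (v a) (gw i) < t <= m)%N ->
    \sum_(j : 'I_m | (dindex (v a) (gw i) <= j < t)%N) v a j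
    <= \sum_(j : 'I_m | (dindex (v a) (gw i) <= j < t)%N) vstar gw g i j.+1.
Proof.
move=> ci i a _ t /andP[lt_dt le_tm].
have [N Lgrp_iE] := Lgrp_nat ci i.
rewrite (eq_bigr (fun j : 'I_m => cost v a j)) => [|j _]; last by rewrite cost_ord.
rewrite sum_ord_nat_range // (sum_ord_nat_range _ (fun j => vstar gw g i j.+1)) //.
by apply: (sum_cost_le_proxy ci Lgrp_iE); rewrite ltnW.
Qed.
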